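(* Let $L$ be a non-trivial regular pseudocomplemented de Morgan algebra with dual $pm$-space $P$, and let $n<\omega$. Then $L$ is a simple algebra of $\mathbf{M}_n$ if and only if for all $x,y\in P$, $\ell(x,y)\le n$ or $\ell(x,\zeta(y))\le n$.
   Context: A $pm$-algebra is $(L;\wedge,\vee,{}^\ast,{}^\prime,0,1)$ with bounded distributive lattice reduct, pseudocomplement ${}^\ast$ and de Morgan involution ${}^\prime$; regular means any two congruences sharing a class are equal. $\mathbf{M}_n$ is the variety of regular $pm$-algebras satisfying $(x\wedge x^{\prime\ast})^{n(\prime\ast)}=(x\wedge x^{\prime\ast})^{(n+1)(\prime\ast)}$, where $x^{0(\prime\ast)}=x$, $x^{(k+1)(\prime\ast)}=((x^{k(\prime\ast)})')^\ast$. The dual $pm$-space is the Priestley space $(P;\tau,\le)$ of prime ideals with involution $\zeta(I)=\{a:a'\notin I\}$. $\ell(x,y)$ is the distance in the comparability graph of $(P;\le)$ ($0$ if $x=y$, $\infty$ if no path). *)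

From Stdlib Require Import Arith.

(** * pm-algebras: bounded distributive lattices with a pseudocomplement
      [pc] ( ^* ) and a de Morgan involution [neg] ( ' ). *)
Record pmAlgebra := PmAlgebra {
  car :> Type;
  meet : car -> car -> car;
  join : car -> car -> car;
  pc : car -> car;
  neg : car -> car;
  bot : car;
  top : car;
  meetA : forall a b c, meet a (meet b c) = meet (meet a b) c;
  joinA : forall a b c, join a (join b c) = join (join a b) c;
  meetC : forall a b, meet a b = meet b a;
  joinC : forall a b, join a b = join b a;
  meet_join_absorb : forall a b, meet a (join a b) = a;
  join_meet_absorb : forall a b, join a (meet a b) = a;
  meet_join_distr : forall a b c, meet a (join b c) = join (meet a b) (meet a c);
  join_bot : forall a, join a bot = a;
  meet_top : forall a, meet a top = a;
  pc_spec : forall a b, meet a b = bot <-> meet b (pc a) = b;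
  negK : forall a, neg (neg a) = a;
  neg_join : forall a b, neg (join a b) = meet (neg a) (neg b);
  neg_meet : forall a b, neg (meet a b) = join (neg a) (neg b)
}.

Arguments meet {_}. Arguments join {_}. Arguments pc {_}. Arguments neg {_}.
Arguments bot {_}. Arguments top {_}.

Section PM.
Variable L : pmAlgebra.

Definition leL (a b : L) : Prop := meet a b = a.

Definition nontrivial : Prop := (bot : L) <> top.

Definition congruence (R : L -> L -> Prop) : Prop :=
  (forall a, R a a) /\ (forall a b, R a b -> R b a) /\
  (forall a b c, R a b -> R b c -> R a c) /\
  (forall a b c d, R a b -> R c d -> R (meet a c) (meet b d)) /\
  (forall a b c d, R a b -> R c d -> R (join a c) (join b d)) /\
  (forall a b, R a b -> R (pc a) (pc b)) /\
  (forall a b, R a b -> R (neg a) (neg b)).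

Definition same_rel (R S : L -> L -> Prop) : Prop := forall a b, R a b <-> S a b.

Definition regular : Prop :=
  forall R S, congruence R -> congruence S ->
  forall a, (forall b, R a b <-> S a b) -> same_rel R S.

Definition simple : Prop :=
  nontrivial /\
  forall R, congruence R ->
    same_rel R (fun a b => a = b) \/ same_rel R (fun _ _ => True).

Fixpoint iter_negpc (k : nat) (x : L) : L :=
  match k with
  | 0 => x
  | S k' => pc (neg (iter_negpc k' x))
  end.

Definition satisfies_Mn_identity (n : nat) : Prop :=
  forall x : L,
    iter_negpc n (meet x (pc (neg x))) = iter_negpc (S n) (meet x (pc (neg x))).

Definition in_Mn (n : nat) : Prop := regular /\ satisfies_Mn_identity n.

(** * Dual pm-space: prime ideals, ordered by inclusion, with involution zeta *)
Definition prime_ideal (I : L -> Prop) : Prop :=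
  I bot /\
  (forall a b, I b -> leL a b -> I a) /\
  (forall a b, I a -> I b -> I (join a b)) /\
  ~ I top /\
  (forall a b, I (meet a b) -> I a \/ I b).

Definition zeta (I : L -> Prop) : L -> Prop := fun a => ~ I (neg a).

Definition subsetP (I J : L -> Prop) : Prop := forall a, I a -> J a.
Definition sameP (I J : L -> Prop) : Prop := forall a, I a <-> J a.
Definition comparableP (I J : L -> Prop) : Prop := subsetP I J \/ subsetP J I.

Fixpoint walk (k : nat) (I J : L -> Prop) : Prop :=
  match k with
  | 0 => sameP I J
  | S k' => exists K, prime_ideal K /\ walk k' I K /\ comparableP K J
  end.

(** ell(I,J) <= n, where ell is the graph distance (infinite if no path) *)
Definition ell_le (I J : L -> Prop) (n : nat) : Prop :=
  exists k, k <= n /\ walk k I J.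

End PM.

(* The dual space turns [x ↦ x'^*] into the relation [zeta I ⊆ J] between prime ideals, so a
   prime [K] avoids [(x ∧ x'^* )^{n('* )}] exactly when [x] lies in no prime reachable from [K]
   in [n] or [n+1] such steps, and these chains are comparability walks followed by [zeta].
   Hence the distance condition yields the identity of [M_n] and turns
   [x ↦ (x ∧ x'^* )^{(n+1)('* )}] into the characteristic function of [top], which together
   with regularity forces simplicity. Conversely, regularity forbids chains of three primes, so
   one may take [I] minimal and [J] maximal; if [ℓ(I,J)] and [ℓ(I,ζJ)] both exceed [n], a
   compactness argument produces [w = w'^*] avoided by [I] but not by every prime, and agreeing
   on the primes that avoid [w] is a congruence that is neither trivial nor total. *)

From Stdlib Require Import Arith Classical FunctionalExtensionality PropExtensionality Lia.
From mathcomp Require classical_sets.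

Section PmAlgebra.

Variable L : pmAlgebra.
Implicit Types (a b c d e x y : L) (I J K X Y : L -> Prop).

Local Notation le := (leL L).
Local Notation prime := (prime_ideal L).
Local Notation "I ⊆ J" := (subsetP L I J) (at level 70).

Lemma meet_idem a : meet a a = a.
Proof. rewrite <- (join_meet_absorb L a a) at 2. apply meet_join_absorb. Qed.

Lemma meet_bot a : meet a bot = bot.
Proof.
  rewrite meetC, <- (join_bot L a) at 1. rewrite joinC. apply meet_join_absorb.
Qed.

Lemma le_refl a : le a a.
Proof. apply meet_idem. Qed.

Lemma le_trans a b c : le a b -> le b c -> le a c.
Proof. unfold leL. intros Hab Hbc. rewrite <- Hab, <- meetA, Hbc. reflexivity. Qed.

Lemma le_antisym a b : le a b -> le b a -> a = b.
Proof. unfold leL. intros Hab Hba. rewrite <- Hab, meetC. exact Hba. Qed.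

Lemma le_bot a : le bot a.
Proof. unfold leL. rewrite meetC. apply meet_bot. Qed.

Lemma le_top a : le a top.
Proof. apply meet_top. Qed.

Lemma le_bot_eq a : le a bot -> a = bot.
Proof. intro H. apply le_antisym; [exact H | apply le_bot]. Qed.

Lemma le_meet_l a b : le (meet a b) a.
Proof. unfold leL. rewrite (meetC L (meet a b) a), meetA, meet_idem. reflexivity. Qed.

Lemma le_meet_r a b : le (meet a b) b.
Proof. unfold leL. rewrite <- meetA, meet_idem. reflexivity. Qed.

Lemma le_join_l a b : le a (join a b).
Proof. apply meet_join_absorb. Qed.

Lemma le_join_r a b : le b (join a b).
Proof. unfold leL. rewrite joinC. apply meet_join_absorb. Qed.

Lemma meet_glb a b c : le a b -> le a c -> le a (meet b c).
Proof. unfold leL. intros Hb Hc. rewrite meetA, Hb. exact Hc. Qed.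

Lemma join_lub a b c : le a c -> le b c -> le (join a b) c.
Proof.
  unfold leL. intros Ha Hb.
  rewrite meetC, meet_join_distr, (meetC L c a), (meetC L c b), Ha, Hb. reflexivity.
Qed.

Lemma meet_mono a b c d : le a b -> le c d -> le (meet a c) (meet b d).
Proof.
  intros Hab Hcd. apply meet_glb.
  - exact (le_trans _ _ _ (le_meet_l a c) Hab).
  - exact (le_trans _ _ _ (le_meet_r a c) Hcd).
Qed.

Lemma join_mono a b c d : le a b -> le c d -> le (join a c) (join b d).
Proof.
  intros Hab Hcd. apply join_lub.
  - exact (le_trans _ _ _ Hab (le_join_l b d)).
  - exact (le_trans _ _ _ Hcd (le_join_r b d)).
Qed.

Lemma neg_anti a b : le a b -> le (neg b) (neg a).
Proof.
  unfold leL. intro Hab. rewrite <- Hab, neg_meet, joinC.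
  apply meet_join_absorb.
Qed.

Lemma neg_bot : neg (bot : L) = top.
Proof.
  apply le_antisym; [apply le_top |].
  rewrite <- (negK L top). apply neg_anti, le_bot.
Qed.

Lemma neg_top : neg (top : L) = bot.
Proof. rewrite <- (negK L bot), neg_bot. reflexivity. Qed.

Lemma le_pc a b : le b (pc a) <-> meet a b = bot.
Proof. split; apply pc_spec. Qed.

Lemma pc_meet a : meet a (pc a) = bot.
Proof. apply le_pc, le_refl. Qed.

Lemma pc_bot : pc (bot : L) = top.
Proof. apply le_antisym; [apply le_top | apply le_pc; rewrite meetC; apply meet_bot]. Qed.

Lemma pc_eq_top a : pc a = top -> a = bot.
Proof. intro H. rewrite <- (meet_top L a), <- H. apply pc_meet. Qed.

Lemma pc_anti a b : le a b -> le (pc b) (pc a).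
Proof.
  intro Hab. apply le_pc, le_bot_eq.
  rewrite <- (pc_meet b). apply meet_mono; [exact Hab | apply le_refl].
Qed.

Lemma pc_join a b : pc (join a b) = meet (pc a) (pc b).
Proof.
  apply le_antisym.
  - apply meet_glb; apply pc_anti; [apply le_join_l | apply le_join_r].
  - apply le_pc, le_bot_eq. rewrite meetC, meet_join_distr.
    apply join_lub.
    + rewrite <- (pc_meet a). rewrite meetC. apply meet_mono; [apply le_refl | apply le_meet_l].
    + rewrite <- (pc_meet b). rewrite meetC. apply meet_mono; [apply le_refl | apply le_meet_r].
Qed.

Lemma pc_join_pc a : pc (join a (pc a)) = bot.
Proof. rewrite pc_join. apply pc_meet. Qed.

Lemma pc_meet_dense a b : pc b = bot -> pc (meet a b) = pc a.
Proof.
  intro Hb. apply le_antisym; [| apply pc_anti, le_meet_l].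
  apply le_pc, le_bot_eq. rewrite <- Hb. apply le_pc.
  rewrite meetA, (meetC L b a). apply pc_meet.
Qed.

Definition is_ideal I :=
  I bot /\ (forall a b, I b -> le a b -> I a) /\ (forall a b, I a -> I b -> I (join a b)).

Definition is_filter I :=
  I top /\ (forall a b, I a -> le a b -> I b) /\ (forall a b, I a -> I b -> I (meet a b)).

Definition disjoint I J := forall a, I a -> J a -> False.

Lemma ideal_join_generated K c :
  is_ideal K -> is_ideal (fun e => exists k, K k /\ le e (join k c)).
Proof.
  intros [K0 [Kdown Kjoin]]. split; [| split].
  - exists bot. split; [exact K0 | apply le_bot].
  - intros x y [k [Kk Hk]] Hxy. exists k. split; [exact Kk | exact (le_trans _ _ _ Hxy Hk)].
  - intros x y [k1 [Kk1 H1]] [k2 [Kk2 H2]]. exists (join k1 k2). split; [auto |].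
    apply join_lub.
    + apply (le_trans _ _ _ H1), join_mono; [apply le_join_l | apply le_refl].
    + apply (le_trans _ _ _ H2), join_mono; [apply le_join_r | apply le_refl].
Qed.

Lemma prime_of_maximal_disjoint K F :
  is_ideal K -> is_filter F -> disjoint K F ->
  (forall c, ~ K c -> exists f k, F f /\ K k /\ le f (join k c)) -> prime K.
Proof.
  intros [K0 [Kdown Kjoin]] [Ftop [_ Fmeet]] HKF Hmax.
  split; [exact K0 | split; [exact Kdown | split; [exact Kjoin | split]]].
  - intro Ktop. exact (HKF top Ktop Ftop).
  - intros a b Kab. apply NNPP. intros [Na Nb]%not_or_and.
    destruct (Hmax a Na) as [f1 [k1 [F1 [K1 H1]]]].
    destruct (Hmax b Nb) as [f2 [k2 [F2 [K2 H2]]]].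
    apply (HKF (meet f1 f2)); [| exact (Fmeet _ _ F1 F2)].
    apply (Kdown _ (join (join k1 k2) (meet a b))); [exact (Kjoin _ _ (Kjoin _ _ K1 K2) Kab) |].
    apply (le_trans _ _ _ (meet_mono _ _ _ _ H1 H2)).
    rewrite meet_join_distr. apply join_lub.
    + apply (le_trans _ _ _ (le_meet_r _ _)).
      apply (le_trans _ _ _ (le_join_r k1 k2)), le_join_l.
    + rewrite meetC, meet_join_distr. apply join_lub.
      * apply (le_trans _ _ _ (le_meet_r _ _)).
        apply (le_trans _ _ _ (le_join_l k1 k2)), le_join_l.
      * rewrite meetC. apply le_join_r.
Qed.

(* Zorn's lemma is applied to the sets [A] for which [A ∪ I0] is an ideal disjoint from [F];
   taking the union with [I0] makes the empty chain harmless. *)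
Definition ideal_over_disjoint I0 F A :=
  is_ideal (fun x => A x \/ I0 x) /\ disjoint (fun x => A x \/ I0 x) F.

Lemma ideal_over_disjoint_chain I0 F (C : (L -> Prop) -> Prop) :
  is_ideal I0 -> disjoint I0 F ->
  (forall X, C X -> ideal_over_disjoint I0 F X) ->
  (forall X Y, C X -> C Y -> X ⊆ Y \/ Y ⊆ X) ->
  ideal_over_disjoint I0 F (fun a => exists2 X, C X & X a).
Proof.
  intros [I0bot [I0down I0join]] HI0F HC Htot.
  assert (Hdown : forall X a b, C X -> X b -> le a b -> X a \/ I0 a).
  { intros X a b CX Xb Hab. destruct (HC X CX) as [[_ [HX _]] _]. exact (HX a b (or_introl Xb) Hab). }
  assert (Hjoin : forall X a b, C X -> X a \/ I0 a -> X b \/ I0 b -> X (join a b) \/ I0 (join a b)).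
  { intros X a b CX. destruct (HC X CX) as [[_ [_ HX]] _]. apply HX. }
  split; [split; [| split] |].
  - right. exact I0bot.
  - intros a b [[X CX Xb] | I0b] Hab.
    + destruct (Hdown X a b CX Xb Hab) as [Xa | I0a]; [left; exists X |]; auto.
    + right. eauto.
  - intros a b [[X CX Xa] | I0a] [[Y CY Yb] | I0b].
    + destruct (Htot X Y CX CY) as [XY | YX].
      * destruct (Hjoin Y a b CY (or_introl (XY a Xa)) (or_introl Yb)); [left; exists Y |]; auto.
      * destruct (Hjoin X a b CX (or_introl Xa) (or_introl (YX b Yb))); [left; exists X |]; auto.
    + destruct (Hjoin X a b CX (or_introl Xa) (or_intror I0b)); [left; exists X |]; auto.
    + destruct (Hjoin Y a b CY (or_intror I0a) (or_introl Yb)); [left; exists Y |]; auto.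
    + right. auto.
  - intros a [[X CX Xa] | I0a] Fa.
    + exact (proj2 (HC X CX) a (or_introl Xa) Fa).
    + exact (HI0F a I0a Fa).
Qed.

Theorem prime_ideal_theorem I0 F :
  is_ideal I0 -> is_filter F -> disjoint I0 F ->
  exists K, prime K /\ I0 ⊆ K /\ disjoint K F.
Proof.
  intros HI0 HF HI0F.
  destruct (@classical_sets.Zorn_bigcup L (ideal_over_disjoint I0 F)) as [A [[HK HKF] Amax]].
  { intros C HC Htot. exact (ideal_over_disjoint_chain I0 F C HI0 HI0F HC Htot). }
  exists (fun x => A x \/ I0 x). split; [| split; [intros a; auto | exact HKF]].
  apply (prime_of_maximal_disjoint _ F HK HF HKF).
  intros c Nc. set (Kc := fun e => exists k, (A k \/ I0 k) /\ le e (join k c)).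
  assert (HKc : is_ideal Kc) by exact (ideal_join_generated _ c HK).
  assert (KKc : forall x, A x \/ I0 x -> Kc x).
  { intros x Kx. exists x. split; [exact Kx | apply le_join_l]. }
  apply NNPP. intro Hno. apply (Amax Kc).
  - split.
    + intros x Ax. apply KKc. left. exact Ax.
    + intro KcA. apply Nc. left. apply KcA. exists bot. split; [exact (proj1 HK) | apply le_join_r].
  - destruct HKc as [Kc0 [Kcdown Kcjoin]]. split; [split; [| split] |].
    + left. exact Kc0.
    + intros x y [Kcy | I0y] Hxy; left; [exact (Kcdown x y Kcy Hxy) |].
      apply (Kcdown x y); [apply KKc; right |]; assumption.
    + intros x y Hx Hy. left.
      apply Kcjoin; [destruct Hx as [Hx | Hx] | destruct Hy as [Hy | Hy]];
        try assumption; apply KKc; right; assumption.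
    + intros x [[k [Kk Hk]] | I0x] Fx.
      * apply Hno. exists x, k. auto.
      * exact (HI0F x I0x Fx).
Qed.

Corollary prime_above_proper_ideal I0 :
  is_ideal I0 -> ~ I0 top -> exists K, prime K /\ I0 ⊆ K.
Proof.
  intros HI0 Ntop.
  destruct (prime_ideal_theorem I0 (fun e => e = top)) as [K [HK [Sub _]]];
    [exact HI0 | | | exists K; auto].
  - split; [reflexivity | split].
    + intros x y -> Hxy. apply le_antisym; [apply le_top | exact Hxy].
    + intros x y -> ->. apply meet_top.
  - intros x I0x ->. exact (Ntop I0x).
Qed.

Lemma pred_ext I J : (forall x, I x <-> J x) -> I = J.
Proof.
  intro H. apply functional_extensionality. intro x. apply propositional_extensionality. apply H.
Qed.

Lemma subset_refl I : I ⊆ I.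
Proof. intros x Ix. exact Ix. Qed.

Lemma subset_trans I J K : I ⊆ J -> J ⊆ K -> I ⊆ K.
Proof. intros IJ JK x Ix. exact (JK x (IJ x Ix)). Qed.

Section PrimeIdeal.

Variable K : L -> Prop.
Hypothesis HK : prime K.

Lemma prime_bot : K bot.
Proof. apply HK. Qed.

Lemma prime_top : ~ K top.
Proof. apply HK. Qed.

Lemma prime_down a b : K b -> le a b -> K a.
Proof. apply HK. Qed.

Lemma prime_meet a b : K (meet a b) <-> K a \/ K b.
Proof.
  split; [apply HK |].
  intros [Ka | Kb]; [exact (prime_down _ _ Ka (le_meet_l a b)) | exact (prime_down _ _ Kb (le_meet_r a b))].
Qed.

Lemma prime_join a b : K (join a b) <-> K a /\ K b.
Proof.
  split; [| intros [Ka Kb]; apply HK; assumption].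
  intro Kab. split; [exact (prime_down _ _ Kab (le_join_l a b)) | exact (prime_down _ _ Kab (le_join_r a b))].
Qed.

End PrimeIdeal.

Lemma le_of_primes a b : (forall K, prime K -> K b -> K a) -> le a b.
Proof.
  intro H. apply NNPP. intro Nab.
  destruct (prime_ideal_theorem (fun x => le x b) (fun x => le a x)) as [K [HK [Hb Ha]]].
  - split; [apply le_bot | split].
    + intros x y Hy Hxy. exact (le_trans _ _ _ Hxy Hy).
    + intros x y Hx Hy. exact (join_lub _ _ _ Hx Hy).
  - split; [apply le_top | split].
    + intros x y Hx Hxy. exact (le_trans _ _ _ Hx Hxy).
    + intros x y Hx Hy. exact (meet_glb _ _ _ Hx Hy).
  - intros x Hxb Hax. exact (Nab (le_trans _ _ _ Hax Hxb)).
  - exact (Ha a (H K HK (Hb b (le_refl b))) (le_refl a)).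
Qed.

Lemma eq_of_primes a b : (forall K, prime K -> (K a <-> K b)) -> a = b.
Proof.
  intro H. apply le_antisym; apply le_of_primes; intros K HK; apply (H K HK).
Qed.

Lemma eq_of_primes_avoid a b : (forall K, prime K -> (~ K a <-> ~ K b)) -> a = b.
Proof.
  intro H. apply eq_of_primes. intros K HK. specialize (H K HK).
  split; intro Hx; apply NNPP; intro Nx; tauto.
Qed.

Lemma prime_containing y : y <> top -> exists K, prime K /\ K y.
Proof.
  intro Hy. destruct (prime_above_proper_ideal (fun x => le x y)) as [K [HK Sub]].
  - split; [apply le_bot | split].
    + intros a b Hb Hab. exact (le_trans _ _ _ Hab Hb).
    + intros a b Ha Hb. exact (join_lub _ _ _ Ha Hb).
  - intro Htop. apply Hy. apply le_antisym; [apply le_top | exact Htop].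
  - exists K. split; [exact HK | exact (Sub y (le_refl y))].
Qed.

Lemma zeta_prime K : prime K -> prime (zeta L K).
Proof.
  intro HK. unfold zeta. split; [| split; [| split; [| split]]].
  - rewrite neg_bot. exact (prime_top K HK).
  - intros a b Nb Hab Ka. exact (Nb (prime_down K HK _ _ Ka (neg_anti _ _ Hab))).
  - intros a b Na Nb. rewrite neg_join, prime_meet by exact HK. tauto.
  - rewrite neg_top. intro N. exact (N (prime_bot K HK)).
  - intros a b. rewrite neg_meet, prime_join by exact HK. tauto.
Qed.

Lemma zetaK K : zeta L (zeta L K) = K.
Proof. apply pred_ext. intro x. unfold zeta. rewrite negK. split; [apply NNPP | auto]. Qed.

Lemma zeta_anti I J : I ⊆ J -> zeta L J ⊆ zeta L I.
Proof. intros IJ a NJ NI. exact (NJ (IJ _ NI)). Qed.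

Lemma zeta_subset_swap I J : zeta L I ⊆ J -> zeta L J ⊆ I.
Proof. intro Sub. rewrite <- (zetaK I). exact (zeta_anti _ _ Sub). Qed.

Lemma notin_pc K a :
  prime K -> (~ K (pc a) <-> forall K', prime K' -> K' ⊆ K -> K' a).
Proof.
  intro HK. split.
  - intros Npc K' HK' Sub. assert (Hbot : K' (meet a (pc a))) by (rewrite pc_meet; apply prime_bot, HK').
    apply (prime_meet K' HK') in Hbot as [Ka | Kpc]; [exact Ka | contradiction (Npc (Sub _ Kpc))].
  - intros Hbelow Kpc.
    destruct (prime_ideal_theorem (fun x => x = bot) (fun e => exists c, ~ K c /\ le (meet c a) e))
      as [K' [HK' [_ HK'F]]].
    + split; [reflexivity | split].
      * intros x y -> Hxy. exact (le_bot_eq _ Hxy).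
      * intros x y -> ->. apply join_bot.
    + split; [| split].
      * exists top. split; [exact (prime_top K HK) | apply le_top].
      * intros x y [c [Nc Hc]] Hxy. exists c. split; [exact Nc | exact (le_trans _ _ _ Hc Hxy)].
      * intros x y [c1 [N1 H1]] [c2 [N2 H2]]. exists (meet c1 c2).
        split; [rewrite (prime_meet K HK); tauto |].
        apply meet_glb.
        -- apply (le_trans _ (meet c1 a)); [apply meet_mono; [apply le_meet_l | apply le_refl] | exact H1].
        -- apply (le_trans _ (meet c2 a)); [apply meet_mono; [apply le_meet_r | apply le_refl] | exact H2].
    + intros x -> [c [Nc Hc]]. apply Nc. apply (prime_down K HK _ _ Kpc).
      apply le_pc. rewrite meetC. exact (le_bot_eq _ Hc).
    + apply (HK'F a).
      * apply Hbelow; [exact HK' |].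
        intros x K'x. apply NNPP. intro Nx. apply (HK'F x K'x). exists x. split; [exact Nx | apply le_meet_l].
      * exists top. split; [exact (prime_top K HK) | rewrite meetC, meet_top; apply le_refl].
Qed.

Lemma notin_pc_neg K b :
  prime K -> (~ K (pc (neg b)) <-> forall J, prime J -> zeta L K ⊆ J -> ~ J b).
Proof.
  intro HK. rewrite notin_pc by exact HK. split.
  - intros H J HJ Sub Jb. specialize (H (zeta L J) (zeta_prime J HJ) (zeta_subset_swap K J Sub)).
    unfold zeta in H. rewrite negK in H. exact (H Jb).
  - intros H K' HK' Sub. apply NNPP. intro Nb.
    exact (H (zeta L K') (zeta_prime K' HK') (zeta_anti _ _ Sub) Nb).
Qed.

(* The [k]-fold dual of [b ↦ b'^*], by [notin_pc_neg]. *)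
Fixpoint zreach (k : nat) I J : Prop :=
  match k with
  | 0 => I = J
  | S k => exists K, prime K /\ zeta L I ⊆ K /\ zreach k K J
  end.

Lemma zreach_prime k I J : prime I -> zreach k I J -> prime J.
Proof.
  revert I. induction k as [| k IH]; intros I HI HR; [simpl in HR; subst; exact HI |].
  destruct HR as [K [HK [_ HR]]]. exact (IH K HK HR).
Qed.

Lemma notin_iter_negpc k K a :
  prime K -> (~ K (iter_negpc L k a) <-> forall Y, prime Y -> zreach k K Y -> ~ Y a).
Proof.
  revert K. induction k as [| k IH]; intros K HK; simpl.
  - split; [intros Na Y _ <-; exact Na | intro H; exact (H K HK eq_refl)].
  - rewrite notin_pc_neg by exact HK. split.
    + intros H Y HY [J [HJ [Sub HR]]]. exact (proj1 (IH J HJ) (H J HJ Sub) Y HY HR).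
    + intros H J HJ Sub. apply (IH J HJ). intros Y HY HR. apply (H Y HY). exists J. auto.
Qed.

Lemma iter_negpc_mono k a b : le a b -> le (iter_negpc L k a) (iter_negpc L k b).
Proof.
  intro Hab. apply le_of_primes. intros K HK Kb. apply NNPP. intro Na.
  revert Kb. apply (notin_iter_negpc k K b HK).
  intros Y HY HR Yb. exact (proj1 (notin_iter_negpc k K a HK) Na Y HY HR (prime_down Y HY _ _ Yb Hab)).
Qed.

Lemma zreach_last m I Y :
  prime I -> prime Y ->
  (zreach (S m) I Y <-> exists K, prime K /\ zreach m I K /\ zeta L K ⊆ Y).
Proof.
  revert I. induction m as [| m IH]; intros I HI HY.
  - split.
    + intros [K [HK [Sub HKY]]]. simpl in HKY. subst K.
      exists I. split; [exact HI | split; [reflexivity | exact Sub]].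
    + intros [K [HK [HIK Sub]]]. simpl in HIK. subst K.
      exists Y. split; [exact HY | split; [exact Sub | reflexivity]].
  - split.
    + intros [K' [HK' [Sub HR]]]. apply (IH K' HK' HY) in HR as [K [HK [HR Sub2]]].
      exists K. split; [exact HK | split; [exists K'; auto | exact Sub2]].
    + intros [K [HK [[K' [HK' [Sub HR]]] Sub2]]]. exists K'.
      split; [exact HK' | split; [exact Sub | apply (IH K' HK' HY); exists K; auto]].
Qed.

Lemma zreach_zeta m I Y : prime I -> zreach m I Y -> zreach (S m) I (zeta L Y).
Proof.
  intros HI HR. assert (HY := zreach_prime m I Y HI HR).
  apply zreach_last; [exact HI | exact (zeta_prime Y HY) |].
  exists Y. split; [exact HY | split; [exact HR | apply subset_refl]].
Qed.

Lemma zreach_add2 m I Y : prime I -> zreach m I Y -> zreach (S (S m)) I Y.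
Proof.
  intros HI HR. rewrite <- (zetaK Y). apply zreach_zeta; [exact HI |]. exact (zreach_zeta m I Y HI HR).
Qed.

Lemma zreach_up m I Y Y' :
  prime I -> zreach (S m) I Y -> prime Y' -> Y ⊆ Y' -> zreach (S m) I Y'.
Proof.
  intros HI HR HY' Sub. assert (HY := zreach_prime (S m) I Y HI HR).
  apply (zreach_last m I Y HI HY) in HR as [K [HK [HR Sub2]]].
  apply zreach_last; [exact HI | exact HY' |]. exists K. split; [exact HK | split; [exact HR |]].
  exact (subset_trans _ _ _ Sub2 Sub).
Qed.

Fixpoint zeta_iter (m : nat) I : L -> Prop :=
  match m with
  | 0 => I
  | S m => zeta L (zeta_iter m I)
  end.

Lemma zeta_iter_prime m Y : prime Y -> prime (zeta_iter m Y).
Proof. intro HY. induction m as [| m IH]; [exact HY | exact (zeta_prime _ IH)]. Qed.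

Lemma zeta_iter_zeta m Y : zeta_iter m (zeta L Y) = zeta L (zeta_iter m Y).
Proof. induction m as [| m IH]; simpl; [reflexivity | rewrite IH; reflexivity]. Qed.

Lemma zeta_iterK m Y : zeta_iter m (zeta_iter m Y) = Y.
Proof.
  induction m as [| m IH]; simpl; [reflexivity |].
  rewrite zeta_iter_zeta, zetaK. exact IH.
Qed.

Lemma zeta_iter_cases m Y : zeta_iter m Y = Y \/ zeta_iter m Y = zeta L Y.
Proof.
  induction m as [| m IH]; simpl; [auto |].
  destruct IH as [-> | ->]; [right | left; apply zetaK]; reflexivity.
Qed.

Lemma zreach_zeta_iter m I : prime I -> zreach m I (zeta_iter m I).
Proof.
  intros HI. induction m as [| m IH]; [reflexivity | exact (zreach_zeta m I _ HI IH)].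
Qed.

Lemma comparable_zeta I J : comparableP L I J -> comparableP L (zeta L I) (zeta L J).
Proof. intros [Sub | Sub]; [right | left]; exact (zeta_anti _ _ Sub). Qed.

Lemma comparable_zeta_iter m I J : comparableP L I J -> comparableP L (zeta_iter m I) (zeta_iter m J).
Proof. intro H. induction m as [| m IH]; [exact H | exact (comparable_zeta _ _ IH)]. Qed.

Lemma walk0 I J : walk L 0 I J -> I = J.
Proof. exact (pred_ext I J). Qed.

Lemma walk_refl I : walk L 0 I I.
Proof. intro x. reflexivity. Qed.

Lemma walk_zeta k I J : walk L k I J -> walk L k (zeta L I) (zeta L J).
Proof.
  revert J. induction k as [| k IH]; intros J HW.
  - apply walk0 in HW. subst. apply walk_refl.
  - destruct HW as [K [HK [HW Hc]]]. exists (zeta L K).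
    split; [exact (zeta_prime K HK) | split; [exact (IH K HW) | exact (comparable_zeta _ _ Hc)]].
Qed.

Lemma walk_cons k I0 I J : prime I0 -> comparableP L I0 I -> walk L k I J -> walk L (S k) I0 J.
Proof.
  intros HI0 Hc. revert J. induction k as [| k IH]; intros J HW.
  - apply walk0 in HW. subst. exists I0. split; [exact HI0 | split; [apply walk_refl | exact Hc]].
  - destruct HW as [K [HK [HW Hc']]]. exists K. split; [exact HK | split; [exact (IH K HW) | exact Hc']].
Qed.

(* An inclusion [zeta_iter m K ⊆ zeta_iter m Y] is absorbed by [zreach_up], which needs a
   previous step; hence [k < m]. *)
Lemma zreach_of_walk k I Y :
  prime I -> prime Y -> walk L k I Y -> forall m, k < m -> zreach m I (zeta_iter m Y).
Proof.
  intros HI. revert Y. induction k as [| k IH]; intros Y HY HW m Hm.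
  - apply walk0 in HW. subst. exact (zreach_zeta_iter m Y HI).
  - destruct HW as [K [HK [HW Hc]]]. destruct m as [| m]; [lia |].
    assert (HR := IH K HK HW m ltac:(lia)). simpl.
    destruct (comparable_zeta_iter m K Y Hc) as [Sub | Sub].
    + apply (zreach_zeta m I _ HI). destruct m as [| m]; [lia |].
      exact (zreach_up m I _ _ HI HR (zeta_iter_prime (S m) Y HY) Sub).
    + apply zreach_last; [exact HI | exact (zeta_prime _ (zeta_iter_prime m Y HY)) |].
      exists (zeta_iter m K). split; [exact (zeta_iter_prime m K HK) | split; [exact HR |]].
      exact (zeta_anti _ _ Sub).
Qed.

Lemma walk_of_zreach m K Y : prime K -> zreach m K Y -> walk L m K (zeta_iter m Y).
Proof.
  revert K. induction m as [| m IH]; intros K HK HR.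
  - simpl in HR. subst. apply walk_refl.
  - destruct HR as [K' [HK' [Sub HR]]].
    apply (walk_cons m K (zeta L K')); [exact HK | right; exact (zeta_subset_swap _ _ Sub) |].
    exact (walk_zeta m K' _ (IH K' HK' HR)).
Qed.

Definition meet_negpc x := meet x (pc (neg x)).

Lemma notin_iter_meet_negpc m K x :
  prime K ->
  (~ K (iter_negpc L m (meet_negpc x)) <->
   forall Y, prime Y -> zreach m K Y \/ zreach (S m) K Y -> ~ Y x).
Proof.
  intro HK. rewrite notin_iter_negpc by exact HK. unfold meet_negpc. split.
  - intros H Y HY [HR | HR] Yx.
    + exact (H Y HY HR (proj2 (prime_meet Y HY _ _) (or_introl Yx))).
    + apply (zreach_last m K Y HK HY) in HR as [Y0 [HY0 [HR Sub]]].
      assert (Npc : ~ Y0 (pc (neg x))).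
      { intro Y0pc. exact (H Y0 HY0 HR (proj2 (prime_meet Y0 HY0 _ _) (or_intror Y0pc))). }
      exact (proj1 (notin_pc_neg Y0 x HY0) Npc Y HY Sub Yx).
  - intros H Y HY HR Ym. apply (prime_meet Y HY) in Ym as [Yx | Ypc].
    + exact (H Y HY (or_introl HR) Yx).
    + revert Ypc. apply (notin_pc_neg Y x HY). intros J HJ Sub.
      apply (H J HJ). right. apply (zreach_last m K J HK HJ). exists Y. auto.
Qed.

Definition ell_close n I J := ell_le L I J n \/ ell_le L I (zeta L J) n.

Definition ell_condition (n : nat) := forall I J, prime I -> prime J -> ell_close n I J.

Lemma ell_condition_zreach n K X :
  ell_condition n -> prime K -> prime X ->
  (zreach (S n) K X /\ zreach (S (S n)) K (zeta L X)) \/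
  (zreach (S n) K (zeta L X) /\ zreach (S (S n)) K X).
Proof.
  intros Hn HK HX.
  assert (HY0 : exists Y0, (Y0 = X \/ Y0 = zeta L X) /\ ell_le L K Y0 n).
  { destruct (Hn K X HK HX) as [H | H]; eauto. }
  destruct HY0 as [Y0 [HY0 [k [Hk HW]]]].
  assert (PY0 : prime Y0) by (destruct HY0 as [-> | ->]; [exact HX | exact (zeta_prime X HX)]).
  assert (R1 : zreach (S n) K (zeta_iter (S n) Y0))
    by exact (zreach_of_walk k K Y0 HK PY0 HW (S n) ltac:(lia)).
  assert (R2 : zreach (S (S n)) K (zeta L (zeta_iter (S n) Y0)))
    by exact (zreach_of_walk k K Y0 HK PY0 HW (S (S n)) ltac:(lia)).
  assert (HZ : zeta_iter (S n) Y0 = X \/ zeta_iter (S n) Y0 = zeta L X).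
  { destruct HY0 as [-> | ->]; [apply zeta_iter_cases |].
    rewrite zeta_iter_zeta. destruct (zeta_iter_cases (S n) X) as [-> | ->]; [right | left; apply zetaK].
    reflexivity. }
  destruct HZ as [E | E]; rewrite E in R1, R2; [left | right; rewrite zetaK in R2]; auto.
Qed.

Lemma ell_condition_zreach_cover n K X :
  ell_condition n -> prime K -> prime X ->
  exists Z, prime Z /\ X ⊆ Z /\ (zreach n K Z \/ zreach (S n) K Z).
Proof.
  intros Hn HK HX.
  destruct (ell_condition_zreach n K X Hn HK HX) as [[HR _] | [HR _]].
  - exists X. split; [exact HX | split; [apply subset_refl | right; exact HR]].
  - apply (zreach_last n K _ HK (zeta_prime X HX)) in HR as [Z [HZ [HR Sub]]].
    exists Z. split; [exact HZ | split; [rewrite <- (zetaK X); exact (zeta_subset_swap _ _ Sub) | left; exact HR]].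
Qed.

Lemma satisfies_Mn_identity_of_ell_condition n : ell_condition n -> satisfies_Mn_identity L n.
Proof.
  intros Hn x. change (meet x (pc (neg x))) with (meet_negpc x).
  apply eq_of_primes_avoid. intros K HK. rewrite !notin_iter_meet_negpc by exact HK. split.
  - intros H Y HY [HR | HR]; [exact (H Y HY (or_intror HR)) |].
    destruct (ell_condition_zreach_cover n K Y Hn HK HY) as [Z [HZ [Sub HZR]]].
    intro Yx. exact (H Z HZ HZR (Sub x Yx)).
  - intros H Y HY [HR | HR]; apply (H Y HY); [right; exact (zreach_add2 n K Y HK HR) | left; exact HR].
Qed.

Lemma ell_condition_notin_iter n K y :
  ell_condition n -> prime K ->
  (~ K (iter_negpc L (S n) (meet_negpc y)) <-> forall Y, prime Y -> ~ Y y).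
Proof.
  intros Hn HK. rewrite notin_iter_meet_negpc by exact HK. split.
  - intros H Y HY. apply (H Y HY).
    destruct (ell_condition_zreach n K Y Hn HK HY) as [[HR _] | [_ HR]]; [left | right]; exact HR.
  - intros H Y HY _. exact (H Y HY).
Qed.

Lemma ell_condition_iter_top n :
  ell_condition n -> iter_negpc L (S n) (meet_negpc top) = top.
Proof.
  intro Hn. apply eq_of_primes_avoid. intros K HK. split; intro N.
  - exact (prime_top K HK).
  - apply (ell_condition_notin_iter n K top Hn HK). intros Y HY. exact (prime_top Y HY).
Qed.

Lemma ell_condition_iter_bot n y :
  ell_condition n -> y <> top -> iter_negpc L (S n) (meet_negpc y) = bot.
Proof.
  intros Hn Hy. apply eq_of_primes. intros K HK. split; intro H; [exact (prime_bot K HK) |].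
  apply NNPP. intro N. destruct (prime_containing y Hy) as [Y [HY Yy]].
  exact (proj1 (ell_condition_notin_iter n K y Hn HK) N Y HY Yy).
Qed.

Lemma congruence_eq : congruence L (@eq L).
Proof. repeat split; intros; subst; reflexivity. Qed.

Lemma congruence_iter_negpc R k a b :
  congruence L R -> R a b -> R (iter_negpc L k a) (iter_negpc L k b).
Proof.
  intros [_ [_ [_ [_ [_ [Rpc Rneg]]]]]] Hab.
  induction k as [| k IH]; [exact Hab | exact (Rpc _ _ (Rneg _ _ IH))].
Qed.

(* By regularity a congruence other than [Δ] identifies [top] with some [b ≠ top];
   the term [x ↦ (x ∧ x'^* )^{(n+1)('* )}] then identifies [top] with [bot]. *)
Lemma simple_of_ell_condition n : nontrivial L -> regular L -> ell_condition n -> simple L.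
Proof.
  intros Hnt Hreg Hn. split; [exact Hnt |]. intros R HR.
  destruct (classic (same_rel L R eq)) as [E | NE]; [left; exact E | right].
  assert (Hb : exists b, R top b /\ b <> top).
  { apply NNPP. intro Hno. apply NE. apply (Hreg R eq HR congruence_eq top). intro b. split.
    - intro Rb. apply NNPP. intro Nb. apply Hno. exists b. split; [exact Rb | intro E; apply Nb; auto].
    - intros <-. exact (proj1 HR top). }
  destruct Hb as [b [Rb Nb]].
  assert (Rtb : R top bot).
  { rewrite <- (ell_condition_iter_top n Hn), <- (ell_condition_iter_bot n b Hn Nb).
    apply congruence_iter_negpc; [exact HR |]. unfold meet_negpc.
    destruct HR as [_ [_ [_ [Rmeet [_ [Rpc Rneg]]]]]]. auto. }
  destruct HR as [Rrefl [Rsym [Rtrans [Rmeet _]]]].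
  assert (Rbot : forall a, R a bot).
  { intro a. rewrite <- (meet_top L a) at 1. rewrite <- (meet_bot a). exact (Rmeet _ _ _ _ (Rrefl a) Rtb). }
  intros a c. split; [intros _; exact I | intros _].
  exact (Rtrans _ _ _ (Rbot a) (Rsym _ _ (Rbot c))).
Qed.

Lemma pc_meet_congr a b c : pc a = pc b -> pc (meet a c) = pc (meet b c).
Proof.
  assert (Half : forall a' b' K, pc a' = pc b' -> prime K ->
            ~ K (pc (meet a' c)) -> ~ K (pc (meet b' c))).
  { intros a' b' K E HK. rewrite !notin_pc by exact HK. intros H K' HK' Sub.
    apply (prime_meet K' HK'). destruct (classic (K' c)) as [Kc | Nc]; [right; exact Kc | left].
    assert (Na : ~ K' (pc a')).
    { rewrite notin_pc by exact HK'. intros K'' HK'' Sub2.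
      destruct (proj1 (prime_meet K'' HK'' _ _) (H K'' HK'' (subset_trans _ _ _ Sub2 Sub))) as [Ka | Kc];
        [exact Ka | contradiction (Nc (Sub2 c Kc))]. }
    rewrite E, notin_pc in Na by exact HK'. exact (Na K' HK' (subset_refl K')). }
  intro E. apply eq_of_primes_avoid. intros K HK. split; apply Half; auto.
Qed.

Definition pc_equiv a b := pc a = pc b /\ pc (neg a) = pc (neg b).

Lemma congruence_pc_equiv : congruence L pc_equiv.
Proof.
  unfold pc_equiv. split; [| split; [| split; [| split; [| split; [| split]]]]].
  - split; reflexivity.
  - intros a b [E1 E2]. split; symmetry; assumption.
  - intros a b c [E1 E2] [E3 E4]. split; congruence.
  - intros a b c d [E1 E2] [E3 E4]. rewrite !neg_meet, !pc_join, E2, E4. split; [| reflexivity].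
    rewrite (pc_meet_congr _ _ _ E1), (meetC L b c), (meetC L b d). apply pc_meet_congr, E3.
  - intros a b c d [E1 E2] [E3 E4]. rewrite !neg_join, !pc_join, E1, E3. split; [reflexivity |].
    rewrite (pc_meet_congr _ _ _ E2), (meetC L (neg b)), (meetC L (neg b)). apply pc_meet_congr, E4.
  - intros a b [E1 E2]. rewrite E1. split; reflexivity.
  - intros a b [E1 E2]. rewrite !negK. split; assumption.
Qed.

(* [pc_equiv] and [eq] share the class [{bot}]. *)
Lemma regular_pc_equiv_eq a b : regular L -> pc_equiv a b -> a = b.
Proof.
  intros Hreg Hab. apply (Hreg pc_equiv eq congruence_pc_equiv congruence_eq bot); [| exact Hab].
  intro c. split.
  - intros [E _]. rewrite pc_bot in E. symmetry. exact (pc_eq_top c (eq_sym E)).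
  - intros <-. split; reflexivity.
Qed.

(* With [y ∈ K2 \ K1] and [x ∈ K3 \ K2], regularity forces [x ∧ (x'^* )' ≤ y ∨ y^*],
   since both [y ∨ y^*] and [(x ∧ (x'^* )')'] are dense. *)
Lemma regular_no_prime_chain3 K1 K2 K3 :
  regular L -> prime K1 -> prime K2 -> prime K3 -> K1 ⊆ K2 -> K2 ⊆ K3 -> K2 ⊆ K1 \/ K3 ⊆ K2.
Proof.
  intros Hreg HK1 HK2 HK3 S12 S23. apply NNPP. intros [N21 N32]%not_or_and.
  destruct (not_all_ex_not _ _ N21) as [y Ny]. apply imply_to_and in Ny as [K2y N1y].
  destruct (not_all_ex_not _ _ N32) as [x Nx]. apply imply_to_and in Nx as [K3x N2x].
  set (b := join y (pc y)). set (e := meet x (neg (pc (neg x)))).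
  assert (Hb : pc b = bot) by apply pc_join_pc.
  assert (He : pc (neg e) = bot).
  { unfold e. rewrite neg_meet, negK. apply pc_join_pc. }
  assert (Heb : join b e = b).
  { apply regular_pc_equiv_eq; [exact Hreg | split].
    - rewrite pc_join, Hb, meetC. apply meet_bot.
    - rewrite neg_join. exact (pc_meet_dense _ _ He). }
  assert (K2b : K2 b).
  { apply (prime_join K2 HK2). split; [exact K2y |]. apply NNPP. intro Npc.
    exact (N1y (proj1 (notin_pc K2 y HK2) Npc K1 HK1 S12)). }
  rewrite <- Heb in K2b. apply (prime_join K2 HK2) in K2b as [_ K2e].
  apply (prime_meet K2 HK2) in K2e as [K2x' | K2pc]; [exact (N2x K2x') |].
  assert (Npc : ~ zeta L K2 (pc (neg x))) by (unfold zeta; tauto).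
  rewrite notin_pc_neg, zetaK in Npc by exact (zeta_prime K2 HK2).
  exact (Npc K3 HK3 S23 K3x).
Qed.

Definition minimal_prime I := forall K, prime K -> K ⊆ I -> K = I.

Definition maximal_prime J := forall K, prime K -> J ⊆ K -> K = J.

Lemma subset_antisym I J : I ⊆ J -> J ⊆ I -> I = J.
Proof. intros IJ JI. apply pred_ext. intro x. split; [apply IJ | apply JI]. Qed.

Lemma regular_minimal_or_zeta_minimal I :
  regular L -> prime I -> minimal_prime I \/ minimal_prime (zeta L I).
Proof.
  intros Hreg HI. destruct (classic (minimal_prime I)) as [Hmin | Nmin]; [left; exact Hmin | right].
  assert (HK : exists K, prime K /\ K ⊆ I /\ ~ I ⊆ K).
  { apply NNPP. intro Hno. apply Nmin. intros K HK KI. apply subset_antisym; [exact KI |].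
    apply NNPP. intro NIK. apply Hno. exists K. auto. }
  destruct HK as [K [HK [KI NIK]]]. intros K' HK' Sub.
  assert (IK' : I ⊆ zeta L K').
  { rewrite <- (zetaK I). exact (zeta_anti _ _ Sub). }
  destruct (regular_no_prime_chain3 K I (zeta L K') Hreg HK HI (zeta_prime K' HK') KI IK')
    as [IK | K'I]; [contradiction |].
  rewrite <- (zetaK K'). f_equal. exact (subset_antisym _ _ K'I IK').
Qed.

Lemma maximal_of_zeta_minimal J : minimal_prime (zeta L J) -> maximal_prime J.
Proof.
  intros Hmin K HK JK. rewrite <- (zetaK K), <- (zetaK J). f_equal.
  exact (Hmin _ (zeta_prime K HK) (zeta_anti _ _ JK)).
Qed.

Lemma regular_maximal_or_zeta_maximal J :
  regular L -> prime J -> maximal_prime J \/ maximal_prime (zeta L J).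
Proof.
  intros Hreg HJ.
  destruct (regular_minimal_or_zeta_minimal (zeta L J) Hreg (zeta_prime J HJ)) as [H | H];
    [left | right]; apply maximal_of_zeta_minimal; exact H.
Qed.

Lemma zreach_separation k I X :
  prime I -> prime X -> ~ (exists Y, prime Y /\ zreach k I Y /\ X ⊆ Y) ->
  exists a, X a /\ forall Y, prime Y -> zreach k I Y -> ~ Y a.
Proof.
  revert I. induction k as [| k IH]; intros I HI HX Hno.
  - apply NNPP. intro Hn. apply Hno. exists I. split; [exact HI | split; [reflexivity |]].
    intros a Xa. apply NNPP. intro Ia. apply Hn. exists a. split; [exact Xa |].
    intros Y _ HR. simpl in HR. subst Y. exact Ia.
  - set (I0 := fun e => exists z a, zeta L I z /\ X a /\ le e (join z (iter_negpc L k a))).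
    assert (HZ := zeta_prime I HI).
    destruct (classic (I0 top)) as [[z [a [Iz [Xa Htop]]]] | Ntop].
    + exists a. split; [exact Xa |]. intros Y HY [K [HK [Sub HR]]].
      revert Y HY HR. apply (notin_iter_negpc k K a HK). intro Ka.
      apply (prime_top K HK), (prime_down K HK _ _ (proj2 (prime_join K HK _ _) (conj (Sub z Iz) Ka)) Htop).
    + destruct (prime_above_proper_ideal I0) as [K [HK Sub]]; [| exact Ntop |].
      { split; [| split].
        - exists bot, bot. split; [exact (prime_bot _ HZ) | split; [exact (prime_bot X HX) | apply le_bot]].
        - intros x y [z [a [Iz [Xa Hle]]]] Hxy. exists z, a. split; [exact Iz | split; [exact Xa | exact (le_trans _ _ _ Hxy Hle)]].
        - intros x y [z1 [a1 [Iz1 [Xa1 H1]]]] [z2 [a2 [Iz2 [Xa2 H2]]]].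
          exists (join z1 z2), (join a1 a2).
          split; [apply (prime_join _ HZ); auto | split; [apply (prime_join X HX); auto |]].
          apply join_lub.
          + apply (le_trans _ _ _ H1), join_mono; [apply le_join_l | apply iter_negpc_mono, le_join_l].
          + apply (le_trans _ _ _ H2), join_mono; [apply le_join_r | apply iter_negpc_mono, le_join_r]. }
      assert (Sub' : zeta L I ⊆ K).
      { intros z Iz. apply Sub. exists z, bot.
        split; [exact Iz | split; [exact (prime_bot X HX) | apply le_join_l]]. }
      destruct (IH K HK HX) as [a [Xa Ha]].
      { intros [Y [HY [HR XY]]]. apply Hno. exists Y. split; [exact HY | split; [exists K; auto | exact XY]]. }
      exfalso. apply (proj2 (notin_iter_negpc k K a HK) Ha), Sub. exists bot, a.
      split; [exact (prime_bot _ HZ) | split; [exact Xa | apply le_join_r]].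
Qed.

Lemma congruence_agree_on (U : (L -> Prop) -> Prop) :
  (forall K K', prime K' -> K' ⊆ K -> U K -> U K') ->
  (forall K, prime K -> U K -> U (zeta L K)) ->
  congruence L (fun a b => forall K, prime K -> U K -> (K a <-> K b)).
Proof.
  intros Udown Uzeta. split; [| split; [| split; [| split; [| split; [| split]]]]].
  - intros a K _ _. reflexivity.
  - intros a b H K HK UK. symmetry. exact (H K HK UK).
  - intros a b c H1 H2 K HK UK. rewrite (H1 K HK UK). exact (H2 K HK UK).
  - intros a b c d H1 H2 K HK UK. rewrite !prime_meet, (H1 K HK UK), (H2 K HK UK) by exact HK.
    reflexivity.
  - intros a b c d H1 H2 K HK UK. rewrite !prime_join, (H1 K HK UK), (H2 K HK UK) by exact HK.
    reflexivity.
  - intros a b H K HK UK.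
    assert (E : ~ K (pc a) <-> ~ K (pc b)).
    { rewrite !notin_pc by exact HK. split; intros Hall K' HK' Sub;
        apply (H K' HK' (Udown K K' HK' Sub UK)), Hall; assumption. }
    split; intro Kpc; apply NNPP; intro N; [apply (proj2 E) in N | apply (proj1 E) in N]; contradiction.
  - intros a b H K HK UK. specialize (H (zeta L K) (zeta_prime K HK) (Uzeta K HK UK)).
    unfold zeta in H. split; intro Kneg; apply NNPP; intro N; tauto.
Qed.

Lemma ell_le_zeta n I J : ell_le L I J n -> ell_le L (zeta L I) (zeta L J) n.
Proof. intros [k [Hk HW]]. exists k. split; [exact Hk | exact (walk_zeta k I J HW)]. Qed.

Lemma ell_close_zeta_l n I J : ell_close n (zeta L I) J -> ell_close n I J.
Proof.
  intros [H | H]; apply ell_le_zeta in H; rewrite zetaK in H; [right | left; rewrite zetaK in H]; exact H.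
Qed.

Lemma ell_close_zeta_r n I J : ell_close n I (zeta L J) -> ell_close n I J.
Proof. unfold ell_close. rewrite zetaK. tauto. Qed.

Lemma zreach_extremal_far n I J :
  prime I -> prime J -> minimal_prime I -> maximal_prime J -> ~ ell_close n I J ->
  forall m, m <= S n -> ~ (exists Y, prime Y /\ zreach m I Y /\ J ⊆ Y).
Proof.
  intros HI HJ Hmin Hmax Far m Hm [Y [HY [HR JY]]].
  rewrite (Hmax Y HY JY) in HR. destruct m as [| m].
  - simpl in HR. subst J. apply Far. left. exists 0. split; [lia | apply walk_refl].
  - destruct HR as [K [HK [Sub HR]]].
    assert (EK : zeta L K = I) by exact (Hmin _ (zeta_prime K HK) (zeta_subset_swap _ _ Sub)).
    assert (HW := walk_zeta m K _ (walk_of_zreach m K J HK HR)). rewrite EK in HW.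
    apply Far. destruct (zeta_iter_cases (S m) J) as [E | E]; simpl in E; rewrite E in HW;
      [left | right]; exists m; split; [lia | exact HW | lia | exact HW].
Qed.

(* With [w := (a ∧ a'^* )^{n('* )}] for a suitable [a ∈ J], the identity of [M_n] says
   [w = w'^*], so the primes avoiding [w] form a down-set closed under [zeta]; the
   congruence of agreeing on them is then neither [Δ] nor [∇]. *)
Lemma simple_Mn_extremal_close n I J :
  satisfies_Mn_identity L n -> simple L -> prime I -> prime J ->
  minimal_prime I -> maximal_prime J -> ell_close n I J.
Proof.
  intros Hid [_ Hs] HI HJ Hmin Hmax. apply NNPP. intro Far.
  assert (Hsep := zreach_extremal_far n I J HI HJ Hmin Hmax Far).
  destruct (zreach_separation n I J HI HJ (Hsep n ltac:(lia))) as [a1 [Ja1 Ha1]].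
  destruct (zreach_separation (S n) I J HI HJ (Hsep (S n) ltac:(lia))) as [a2 [Ja2 Ha2]].
  set (a := join a1 a2). set (w := iter_negpc L n (meet_negpc a)).
  assert (Ja : J a) by (apply (prime_join J HJ); auto).
  assert (Iw : ~ I w).
  { apply notin_iter_meet_negpc; [exact HI |]. intros Y HY HR Ya.
    apply (prime_join Y HY) in Ya as [Y1 Y2].
    destruct HR as [HR | HR]; [exact (Ha1 Y HY HR Y1) | exact (Ha2 Y HY HR Y2)]. }
  assert (Ew : w = pc (neg w)) by exact (Hid a).
  assert (Hcong : congruence L (fun b c => forall K, prime K -> ~ K w -> (K b <-> K c))).
  { apply congruence_agree_on.
    - intros K K' _ Sub NK K'w. exact (NK (Sub w K'w)).
    - intros K HK NK. rewrite Ew, notin_pc_neg in NK by exact HK.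
      exact (NK (zeta L K) (zeta_prime K HK) (subset_refl _)). }
  destruct (Hs _ Hcong) as [E | E].
  - assert (Wtop : w = top).
    { apply (proj1 (E w top)). intros K HK NK. split; intro H; [contradiction | exfalso; exact (prime_top K HK H)]. }
    set (K0 := zeta_iter n J).
    assert (HK0 : prime K0) by exact (zeta_iter_prime n J HJ).
    assert (HR : zreach n K0 J).
    { pose proof (zreach_zeta_iter n K0 HK0) as HR. unfold K0 in HR at 2. rewrite zeta_iterK in HR. exact HR. }
    assert (NK0 : ~ K0 w) by (rewrite Wtop; exact (prime_top K0 HK0)).
    exact (proj1 (notin_iter_meet_negpc n K0 a HK0) NK0 J HJ (or_introl HR) Ja).
  - exact (prime_top I HI (proj1 (proj2 (E bot top) Logic.I I HI Iw) (prime_bot I HI))).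
Qed.

Lemma ell_condition_of_simple_Mn n :
  regular L -> satisfies_Mn_identity L n -> simple L -> ell_condition n.
Proof.
  intros Hreg Hid Hs I J HI HJ.
  destruct (regular_minimal_or_zeta_minimal I Hreg HI) as [Hmin | Hmin];
    [| apply ell_close_zeta_l];
  (destruct (regular_maximal_or_zeta_maximal J Hreg HJ) as [Hmax | Hmax];
    [| apply ell_close_zeta_r]);
  apply simple_Mn_extremal_close; auto using zeta_prime.
Qed.

End PmAlgebra.

Theorem corollary4p3 (L : pmAlgebra) (n : nat) :
  nontrivial L -> regular L ->
  ((in_Mn L n /\ simple L) <->
   (forall I J : L -> Prop, prime_ideal L I -> prime_ideal L J ->
      ell_le L I J n \/ ell_le L I (zeta L J) n)).
Proof.
  intros Hnt Hreg. split.
  - intros [[_ Hid] Hs]. exact (ell_condition_of_simple_Mn L n Hreg Hid Hs).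
  - intro Hn. split; [split |].
    + exact Hreg.
    + exact (satisfies_Mn_identity_of_ell_condition L n Hn).
    + exact (simple_of_ell_condition L n Hnt Hreg Hn).
Qed.
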